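(* Let $\mathbb{C}$ be a partial category. Then the family $\mathscr{N}$ of all morphisms $\mathrm{id}_A{\downarrow}U:U\to A$, for objects $U\le A$, is an inclusion system on $\mathbb{C}$.
   Context: Composition is diagrammatic. A partial category is a category with a partial order $\le$ on objects, a restriction operator $(U\le A,\ f:A\to B)\mapsto f{\downarrow}U:U\to B$, and a contraction operator $(V\le B,\ f:A\to B)\mapsto$ an object $A{\uparrow}_fV\le A$ and a morphism $f{\uparrow}V:A{\uparrow}_fV\to V$, satisfying: (P.1) $f{\downarrow}A=f$; (P.2) $(f{\downarrow}U){\downarrow}V=f{\downarrow}V$ for $V\le U\le A$; (P.3) $(f{\downarrow}U)g=(fg){\downarrow}U$; (P.4) $A{\uparrow}_fB=A$, $f{\uparrow}B=f$; (P.4') $A{\uparrow}_{\mathrm{id}_A}U=U$, $\mathrm{id}_A{\uparrow}U=\mathrm{id}_U$ for $U\le A$; (P.5) for $W\le V\le B$: $(A{\uparrow}_fV){\uparrow}_{f{\uparrow}V}W=A{\uparrow}_fW$ and $(f{\uparrow}V){\uparrow}W=f{\uparrow}W$; (P.6) for $g:B\to C$, $W\le C$: $A{\uparrow}_f(B{\uparrow}_gW)=A{\uparrow}_{fg}W$ and $(f{\uparrow}(B{\uparrow}_gW))(g{\uparrow}W)=(fg){\uparrow}W$; (P.7) $(A{\uparrow}_fV){\uparrow}_{f{\downarrow}(A{\uparrow}_fV)}V=A{\uparrow}_fV$ and $(f{\downarrow}(A{\uparrow}_fV)){\uparrow}V=f{\uparrow}V$; (P.8) $(fg){\downarrow}(A{\uparrow}_fV)=(f{\uparrow}V)(g{\downarrow}V)$.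 An inclusion system on a category is a family $\mathscr{N}$ of morphisms such that (I.1) identities belong to $\mathscr{N}$; (I.2) every member of $\mathscr{N}$ is monic; (I.3) any two parallel members of $\mathscr{N}$ are equal; (I.4) $\mathscr{N}$ is closed under composition; (I.5) for every $m:A\to B$ in $\mathscr{N}$ and every $f:C\to B$, a pullback of $m$ along $f$ exists and its leg $m':D\to C$ belongs to $\mathscr{N}$. *)

(* Composition is diagrammatic: comp f g : A -> C for f : A -> B, g : B -> C. *)
Set Implicit Arguments.
Unset Strict Implicit.

Record Category := {
  Obj : Type;
  Hom : Obj -> Obj -> Type;
  idm : forall A, Hom A A;
  comp : forall A B C, Hom A B -> Hom B C -> Hom A C;
  comp_id_l : forall A B (f : Hom A B), comp (idm A) f = f;
  comp_id_r : forall A B (f : Hom A B), comp f (idm B) = f;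
  comp_assoc : forall A B C D (f : Hom A B) (g : Hom B C) (h : Hom C D),
      comp (comp f g) h = comp f (comp g h)
}.

Arguments idm {c} A.
Arguments comp {c A B C} f g.

(* A morphism packed with its domain and codomain; equality of packed
   morphisms expresses equality of morphisms whose (co)domains are only
   propositionally equal (e.g. "f ↑ B = f" in (P.4)). *)
Definition arr (C : Category) := { AB : Obj C * Obj C & Hom (fst AB) (snd AB) }.
Definition pack {C : Category} {A B : Obj C} (f : Hom A B) : arr C :=
  existT (fun AB : Obj C * Obj C => Hom (fst AB) (snd AB)) (A, B) f.

Record PartialCategory := {
  cat :> Category;
  ple : Obj cat -> Obj cat -> Prop;
  ple_refl : forall A, ple A A;
  ple_trans : forall A B D, ple A B -> ple B D -> ple A D;
  ple_antisym : forall A B, ple A B -> ple B A -> A = B;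
  res : forall (A B U : Obj cat), ple U A -> Hom A B -> Hom U B;
  (* contraction: object A↑_f V ≤ A and morphism f↑V : A↑_f V -> V *)
  cobj : forall (A B V : Obj cat), ple V B -> Hom A B -> Obj cat;
  cobj_le : forall A B V (h : ple V B) (f : Hom A B), ple (cobj h f) A;
  cmor : forall A B V (h : ple V B) (f : Hom A B), Hom (cobj h f) V;
  P1 : forall A B (h : ple A A) (f : Hom A B), res h f = f;
  P2 : forall A B U V (hUA : ple U A) (hVU : ple V U) (hVA : ple V A)
         (f : Hom A B), res hVU (res hUA f) = res hVA f;
  P3 : forall A B D U (h : ple U A) (f : Hom A B) (g : Hom B D),
         comp (res h f) g = res h (comp f g);
  P4_obj : forall A B (h : ple B B) (f : Hom A B), cobj h f = A;
  P4_mor : forall A B (h : ple B B) (f : Hom A B), pack (cmor h f) = pack f;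
  P4'_obj : forall A U (h : ple U A), cobj h (idm A) = U;
  P4'_mor : forall A U (h : ple U A), pack (cmor h (idm A)) = pack (idm U);
  P5_obj : forall A B V W (hVB : ple V B) (hWV : ple W V) (hWB : ple W B)
             (f : Hom A B), cobj hWV (cmor hVB f) = cobj hWB f;
  P5_mor : forall A B V W (hVB : ple V B) (hWV : ple W V) (hWB : ple W B)
             (f : Hom A B), pack (cmor hWV (cmor hVB f)) = pack (cmor hWB f);
  P6_obj : forall A B D W (hWD : ple W D) (f : Hom A B) (g : Hom B D),
             cobj (cobj_le hWD g) f = cobj hWD (comp f g);
  P6_mor : forall A B D W (hWD : ple W D) (f : Hom A B) (g : Hom B D),
             pack (comp (cmor (cobj_le hWD g) f) (cmor hWD g))
             = pack (cmor hWD (comp f g));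
  P7_obj : forall A B V (hVB : ple V B) (f : Hom A B),
             cobj hVB (res (cobj_le hVB f) f) = cobj hVB f;
  P7_mor : forall A B V (hVB : ple V B) (f : Hom A B),
             pack (cmor hVB (res (cobj_le hVB f) f)) = pack (cmor hVB f);
  P8 : forall A B D V (hVB : ple V B) (f : Hom A B) (g : Hom B D),
             res (cobj_le hVB f) (comp f g) = comp (cmor hVB f) (res hVB g)
}.

Arguments ple {p} A B.
Arguments res {p A B U} h f.
Arguments cobj {p A B V} h f.
Arguments cmor {p A B V} h f.

Definition morph_family (C : Category) := forall A B : Obj C, Hom A B -> Prop.

Definition monic {C : Category} {A B : Obj C} (m : Hom A B) : Prop :=
  forall (E : Obj C) (x y : Hom E A), comp x m = comp y m -> x = y.

Definition is_pullback {C : Category} {A B X D : Obj C}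
    (m : Hom A B) (f : Hom X B) (m' : Hom D X) (f' : Hom D A) : Prop :=
  comp m' f = comp f' m /\
  forall (E : Obj C) (x : Hom E X) (y : Hom E A), comp x f = comp y m ->
    exists u : Hom E D, (comp u m' = x /\ comp u f' = y) /\
      forall v : Hom E D, comp v m' = x /\ comp v f' = y -> v = u.

Definition inclusion_system (C : Category) (N : morph_family C) : Prop :=
  (forall A, N A A (idm A)) /\
  (forall A B (m : Hom A B), N A B m -> monic m) /\
  (forall A B (m n : Hom A B), N A B m -> N A B n -> m = n) /\
  (forall A B D (m : Hom A B) (n : Hom B D),
                 N A B m -> N B D n -> N A D (comp m n)) /\
  (forall A B X (m : Hom A B) (f : Hom X B), N A B m ->
                 exists (D : Obj C) (m' : Hom D X) (f' : Hom D A),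
                   is_pullback m f m' f' /\ N D X m').

Definition res_id_family (P : PartialCategory) : morph_family P :=
  fun U A m => exists h : ple U A, m = res h (idm A).
Arguments res_id_family P : clear implicits.

(* Write ι_U := id_A↓U.  Precomposition with ι_U is restriction (P.3), and
   contracting ι_U back along U gives (U, id_U) by (P.4') and (P.7); with (P.6)
   and (P.4) this says that contracting y ι_U along U returns y, which makes ι_U
   monic.  For f : X -> A, the square formed by ι_{X↑_f U}, f↑U, f and ι_U
   commutes by (P.8), and a cone (x, y) over it factors through ι_{X↑_f U}
   because, by (P.6), contracting x along X↑_f U amounts to contracting
   x f = y ι_U along U, which does not shrink its domain. *)
From Stdlib Require Import Eqdep.
Set Implicit Arguments.
Unset Strict Implicit.

Section PackedMorphisms.
Variable C : Category.

Lemma pack_dom (A A' B B' : Obj C) (f : Hom A B) (f' : Hom A' B') :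
  pack f = pack f' -> A = A'.
Proof. intro H. exact (f_equal (fun p => fst (projT1 p)) H). Qed.

Lemma pack_cod (A A' B B' : Obj C) (f : Hom A B) (f' : Hom A' B') :
  pack f = pack f' -> B = B'.
Proof. intro H. exact (f_equal (fun p => snd (projT1 p)) H). Qed.

Lemma pack_inj (A B : Obj C) (f g : Hom A B) : pack f = pack g -> f = g.
Proof. intro H. exact (inj_pair2 _ _ _ _ _ H). Qed.

Lemma pack_comp (A A' B B' D D' : Obj C) (f : Hom A B) (f' : Hom A' B')
    (g : Hom B D) (g' : Hom B' D') :
  pack f = pack f' -> pack g = pack g' -> pack (comp f g) = pack (comp f' g').
Proof.
  intros Hf Hg.
  pose proof (pack_dom Hf); pose proof (pack_cod Hf); pose proof (pack_cod Hg).
  subst A' B' D'.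
  apply pack_inj in Hf; apply pack_inj in Hg. subst f' g'. reflexivity.
Qed.

Lemma pack_retype_dom (A A' B : Obj C) (f : Hom A B) :
  A = A' -> exists f' : Hom A' B, pack f' = pack f.
Proof. intro e. subst A'. exists f. reflexivity. Qed.

End PackedMorphisms.

Section Inclusions.
Variable P : PartialCategory.

Definition incl (U A : Obj P) (h : ple U A) : Hom U A := res h (idm A).

(* Restriction does not depend on the proof of [U ≤ A]: compare both sides
   with the restriction of [f↓U] to [U] itself. *)
Lemma res_irrelevant (A B U : Obj P) (h h' : ple U A) (f : Hom A B) :
  res h f = res h' f.
Proof.
  rewrite <- (P2 h (ple_refl U) h f), <- (P2 h (ple_refl U) h' f).
  reflexivity.
Qed.

Lemma pack_res (A B U U' : Obj P) (h : ple U A) (h' : ple U' A) (f : Hom A B) :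
  U = U' -> pack (res h f) = pack (res h' f).
Proof. intro e. subst U'. rewrite (res_irrelevant h h'). reflexivity. Qed.

Lemma cobj_pack (A A' B V : Obj P) (h : ple V B) (f : Hom A B) (f' : Hom A' B) :
  pack f = pack f' -> cobj h f = cobj h f' /\ pack (cmor h f) = pack (cmor h f').
Proof.
  intro Hf. pose proof (pack_dom Hf). subst A'.
  apply pack_inj in Hf. subst f'. split; reflexivity.
Qed.

Lemma cobj_cod (A B K : Obj P) (hK : ple K B) (f : Hom A B) :
  K = B -> cobj hK f = A /\ pack (cmor hK f) = pack f.
Proof. intro e. subst K. split; [apply P4_obj | apply P4_mor]. Qed.

Lemma comp_incl_l (A B U : Obj P) (h : ple U A) (f : Hom A B) :
  comp (incl h) f = res h f.
Proof. unfold incl. rewrite P3, comp_id_l. reflexivity. Qed.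

Lemma incl_refl (A : Obj P) : incl (ple_refl A) = idm A.
Proof. apply P1. Qed.

Lemma incl_comp (A B D : Obj P) (h1 : ple A B) (h2 : ple B D) :
  comp (incl h1) (incl h2) = incl (ple_trans h1 h2).
Proof. rewrite comp_incl_l. apply P2. Qed.

Lemma cobj_incl (A U : Obj P) (h h' : ple U A) :
  cobj h (incl h') = U /\ pack (cmor h (incl h')) = pack (idm U).
Proof.
  assert (Hincl : pack (incl h') = pack (res (cobj_le h (idm A)) (idm A))).
  { apply pack_res. symmetry. apply P4'_obj. }
  destruct (cobj_pack h Hincl) as [Hobj Hmor].
  split.
  - rewrite Hobj, P7_obj. apply P4'_obj.
  - rewrite Hmor, P7_mor. apply P4'_mor.
Qed.

Lemma cobj_comp_incl (A U E : Obj P) (h h' : ple U A) (y : Hom E U) :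
  cobj h (comp y (incl h')) = E /\ pack (cmor h (comp y (incl h'))) = pack y.
Proof.
  destruct (cobj_incl h h') as [HU Hid].
  destruct (cobj_cod (cobj_le h (incl h')) y HU) as [HE Hy].
  split.
  - rewrite <- (P6_obj h y (incl h')). exact HE.
  - rewrite <- (P6_mor h y (incl h')), (pack_comp Hy Hid), comp_id_r.
    reflexivity.
Qed.

Lemma monic_incl (A U : Obj P) (h : ple U A) : monic (incl h).
Proof.
  intros E x y Hxy.
  destruct (cobj_comp_incl h h x) as [_ Hx].
  destruct (cobj_comp_incl h h y) as [_ Hy].
  rewrite Hxy, Hy in Hx. symmetry. exact (pack_inj Hx).
Qed.

Lemma incl_factor (X D E : Obj P) (hD : ple D X) (x : Hom E X) :
  cobj hD x = E ->
  exists u : Hom E D, pack u = pack (cmor hD x) /\ comp u (incl hD) = x.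
Proof.
  intro HE.
  destruct (pack_retype_dom (cmor hD x) HE) as [u Hu].
  exists u. split; [exact Hu|].
  apply pack_inj.
  rewrite (pack_comp Hu (eq_refl (pack (incl hD)))).
  unfold incl. rewrite <- P8, comp_id_r.
  rewrite (pack_res (cobj_le hD x) (ple_refl E) x HE), P1. reflexivity.
Qed.

Lemma incl_pullback (A U X : Obj P) (h : ple U A) (f : Hom X A) :
  is_pullback (incl h) f (incl (cobj_le h f)) (cmor h f).
Proof.
  split.
  - rewrite comp_incl_l. unfold incl. rewrite <- P8, comp_id_r. reflexivity.
  - intros E x y Hcone.
    destruct (cobj_comp_incl h h y) as [HE Hy].
    rewrite <- Hcone in HE, Hy.
    rewrite <- P6_obj in HE. rewrite <- P6_mor in Hy.
    destruct (incl_factor HE) as [u [Hu Hux]].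
    exists u. split.
    + split; [exact Hux|].
      apply pack_inj. rewrite <- Hy.
      exact (pack_comp Hu (eq_refl (pack (cmor h f)))).
    + intros v [Hvx _]. apply (monic_incl (h := cobj_le h f)). congruence.
Qed.

End Inclusions.

Theorem proposition11p12 (P : PartialCategory) :
  inclusion_system (res_id_family P).
Proof.
  unfold inclusion_system, res_id_family; fold incl.
  split; [|split; [|split; [|split]]].
  - intro A. exists (ple_refl A). symmetry. apply incl_refl.
  - intros A B m [h ->]. apply monic_incl.
  - intros A B m n [h ->] [h' ->]. apply res_irrelevant.
  - intros A B D m n [h1 ->] [h2 ->]. exists (ple_trans h1 h2). apply incl_comp.
  - intros A B X m f [h ->].
    exists (cobj h f), (incl (cobj_le h f)), (cmor h f).
    split; [apply incl_pullback | exists (cobj_le h f); reflexivity].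
Qed.
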